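(* Let $G$ be a claw-free graph and $C$ an even hole of length $2k$, labelled $C=\mathbf{b}_0-\mathbf{a}_0-\mathbf{b}_1-\mathbf{a}_1-\dots-\mathbf{b}_{k-1}-\mathbf{a}_{k-1}-\mathbf{b}_0$ (indices mod $k$). Let $\mathbf{s}\notin C$ with $\Gamma_C(\mathbf{s})=\{\mathbf{b}_0,\mathbf{a}_0,\mathbf{b}_1\}$, and let $\mathbf{t}\notin C\cup\{\mathbf{s}\}$ be adjacent to exactly one element of $\{\mathbf{s},\mathbf{a}_0\}$. Then, with $\mathbf{u}\in\{\mathbf{s},\mathbf{a}_0\}$ denoting that element, $\Gamma_{\{\mathbf{s}\}\cup C}(\mathbf{t})$ is one of (i) $\{\mathbf{a}_{k-1},\mathbf{b}_0,\mathbf{u}\}$; (ii) $\{\mathbf{b}_{k-1},\mathbf{a}_{k-1},\mathbf{b}_0,\mathbf{u}\}$; (iii) $\{\mathbf{u},\mathbf{b}_1,\mathbf{a}_1\}$; (iv) $\{\mathbf{u},\mathbf{b}_1,\mathbf{a}_1,\mathbf{b}_2\}$. If $k=2$, cases (ii) and (iv) coincide.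
   Context: A hole is an induced cycle of length at least 4; an even hole has even length. Claw-free: no induced $K_{1,3}$. $\Gamma_U(\mathbf{t})$ denotes the set of neighbours of $\mathbf{t}$ in $U$. (The condition on $\mathbf{s}$ says $(C\setminus\{\mathbf{a}_0\})\cup\{\mathbf{s}\}$ is a single-vertex deformation of $C$, with $\mathbf{a}_0$ the clone of $\mathbf{s}$.) *)

From mathcomp Require Import all_boot.
Set Implicit Arguments. Unset Strict Implicit. Unset Printing Implicit Defensive.

Definition simple_graph (T : finType) (e : rel T) : Prop :=
  symmetric e /\ irreflexive e.

Definition claw_free (T : finType) (e : rel T) : Prop :=
  forall x y z w : T,
    ~ [/\ e x y, e x z, e x w,
          [&& y != z, y != w & z != w] &
          [&& ~~ e y z, ~~ e y w & ~~ e z w]].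

(* C = b_0 - a_0 - b_1 - a_1 - ... - b_{k-1} - a_{k-1} - b_0 is an even hole
   (induced cycle) of length 2k >= 4; indices are read mod k. Only the values
   a i, b i for i < k are relevant. *)
Definition even_hole (T : finType) (e : rel T) (k : nat) (a b : nat -> T) : Prop :=
  2 <= k /\
  (forall i j, i < k -> j < k -> a i = a j -> i = j) /\
  (forall i j, i < k -> j < k -> b i = b j -> i = j) /\
  (forall i j, i < k -> j < k -> a i != b j) /\
  (forall i j, i < k -> j < k -> ~~ e (a i) (a j)) /\
  (forall i j, i < k -> j < k -> ~~ e (b i) (b j)) /\
  (forall i j, i < k -> j < k ->
     e (b i) (a j) = (i == j) || (i == (j + 1) %% k)).

Definition hole_set (T : finType) (k : nat) (a b : nat -> T) : {set T} :=
  [set x | [exists i : 'I_k, (x == a i) || (x == b i)]].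

Definition nbhd_in (T : finType) (e : rel T) (U : {set T}) (t : T) : {set T} :=
  [set x in U | e t x].

From mathcomp Require Import all_boot.
Set Implicit Arguments. Unset Strict Implicit. Unset Printing Implicit Defensive.

(* Deleting a_0 from C leaves the path D = b_1 - a_1 - ... - a_{k-1} - b_0, which
   both s and a_0 see exactly in {b_0, b_1}; let u be the one adjacent to t and w the
   other, so that N = {u} ∪ N_D(t).  The claw at u on {t, b_0, b_1} forces t to see
   b_0 or b_1.  If t sees b_0, the claw at b_0 on {w, t, a_{k-1}} gives t ~ a_{k-1},
   and the claw at t on {u, a_{k-1}, x} confines every neighbour x of t in D to
   (N[a_{k-1}] ∪ N(u)) ∩ D = {b_{k-1}, a_{k-1}, b_0, b_1}.  If t sees both b_0 and b_1, it
   sees a_{k-1} and a_1, and the claw at t on {u, a_{k-1}, a_1} forces a_{k-1} = a_1,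
   i.e. k = 2.  The case of b_1 is symmetric. *)

Section Neighbourhoods.

Variables (T : finType) (e : rel T).

Lemma nbhd_inP (U : {set T}) t x : reflect (x \in U /\ e t x) (x \in nbhd_in e U t).
Proof. by rewrite inE; apply: andP. Qed.

Lemma nbhd_in_sandwich (U S : {set T}) t x : x \in U ->
  S \subset nbhd_in e U t -> nbhd_in e U t \subset x |: S ->
  nbhd_in e U t = if e t x then x |: S else S.
Proof.
move=> xU sSN sNxS; apply/eqP; case: ifP => tx; rewrite eqEsubset.
  by rewrite sNxS subUset sSN sub1set inE xU tx.
rewrite sSN andbT; apply/subsetP => y yN.
move: (subsetP sNxS y yN); rewrite !inE => /predU1P[eq_yx|] //.
by move: yN; rewrite eq_yx inE tx andbF.
Qed.

Lemma nbhd_in_setD1 (U : {set T}) x t : nbhd_in e (U :\ x) t = nbhd_in e U t :\ x.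
Proof. by apply/setP => y; rewrite !inE andbA. Qed.

Lemma nbhd_in_exchange (U : {set T}) x y t : x \in U -> e t y (+) e t x ->
  nbhd_in e (y |: U) t = (if e t y then y else x) |: nbhd_in e (U :\ x) t.
Proof.
move=> xU; case tx: (e t x); case ty: (e t y) => //= _; apply/setP => z; rewrite !inE.
- have [->|_] := eqVneq z x; first by rewrite tx andbT; apply/orP; right.
  by have [->|_] := eqVneq z y; rewrite ?ty ?andbF.
- have [->|_] := eqVneq z y; first by rewrite ty.
  by have [->|_] := eqVneq z x; rewrite ?tx ?andbF.
Qed.
End Neighbourhoods.

Section ClawFree.

Variables (T : finType) (e : rel T).
Hypothesis e_sym : symmetric e.
Hypothesis e_claw_free : claw_free e.

Lemma claw_free_cover x y z v : e x y -> e x z -> e x v -> y != z -> ~~ e y z ->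
  [|| v == y, v == z, e y v | e z v].
Proof.
move=> xy xz xv neq_yz nyz; apply/negPn/negP; rewrite !negb_or => /and4P[vy vz yv zv].
apply: (@e_claw_free x y z v).
by rewrite xy xz xv neq_yz nyz yv zv !(eq_sym _ v) vy vz.
Qed.

Section Attachment.

Variables (D : {set T}) (u w t : T).
Hypotheses (uD : u \notin D) (wD : w \notin D) (tD : t \notin D).
Hypotheses (tu : e t u) (ntw : ~~ e t w) (neq_tw : t != w).

Lemma attach_nbhd_sub b b' a c :
  nbhd_in e D u = [set b; b'] -> nbhd_in e D w = [set b; b'] ->
  a \in D -> a \notin [set b; b'] -> nbhd_in e D a = [set c; b] -> e t b ->
  e t a /\ nbhd_in e D t \subset [set c; a; b] :|: [set b'].
Proof.
move=> Nu Nw aD a_nb Na tb.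
have /nbhd_inP[_ wb] : b \in nbhd_in e D w by rewrite Nw !inE eqxx.
have /nbhd_inP[_ ab] : b \in nbhd_in e D a by rewrite Na !inE eqxx orbT.
have nwa : ~~ e w a by apply: contra a_nb => wa; rewrite -Nw inE aD wa.
have nua : ~~ e u a by apply: contra a_nb => ua; rewrite -Nu inE aD ua.
have ta : e t a.
  have bw : e b w by rewrite e_sym.
  have bt : e b t by rewrite e_sym.
  have ba : e b a by rewrite e_sym.
  have := claw_free_cover bw bt ba _ _; rewrite eq_sym neq_tw e_sym ntw.
  by rewrite (negbTE (memPn wD a aD)) (negbTE (memPn tD a aD)) (negbTE nwa); apply.
split=> //; apply/subsetP => x /nbhd_inP[xD tx].
have neq_ua : u != a by rewrite eq_sym (memPn uD).
have := claw_free_cover tu ta tx neq_ua nua.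
rewrite (negbTE (memPn uD x xD)) /= => /or3P[/eqP->|ux|ax].
- by rewrite !inE eqxx orbT.
- have : x \in nbhd_in e D u by rewrite inE xD ux.
  by rewrite Nu !inE => /orP[]->; rewrite ?orbT.
- have : x \in nbhd_in e D a by rewrite inE xD ax.
  by rewrite Na !inE => /orP[]->; rewrite ?orbT.
Qed.

Lemma attach_nbhd_eq b b' a c :
  nbhd_in e D u = [set b; b'] -> nbhd_in e D w = [set b; b'] ->
  a \in D -> a \notin [set b; b'] -> nbhd_in e D a = [set c; b] ->
  e t b -> (e t b' -> b' = c) ->
  nbhd_in e D t = if e t c then [set c; a; b] else [set a; b].
Proof.
move=> Nu Nw aD a_nb Na tb tb'_eq.
have [ta sub] := attach_nbhd_sub Nu Nw aD a_nb Na tb.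
have /nbhd_inP[cD _] : c \in nbhd_in e D a by rewrite Na !inE eqxx.
have /nbhd_inP[bD _] : b \in nbhd_in e D a by rewrite Na !inE eqxx orbT.
rewrite -setUA; apply: nbhd_in_sandwich => //.
  by rewrite subUset !sub1set !inE aD ta bD tb.
rewrite setUA; apply/subsetP => x xN; move: (subsetP sub x xN).
rewrite in_setU in_set1 => /orP[//|/eqP eq_xb'].
move: xN; rewrite eq_xb' inE => /andP[_ /tb'_eq->].
by rewrite !inE eqxx.
Qed.

(* On the hole, al, bl, ar, br are a_{k-1}, b_{k-1}, a_1, b_2. *)
Variables (b0 b1 al bl ar br : T).
Hypotheses (Nu : nbhd_in e D u = [set b0; b1]) (Nw : nbhd_in e D w = [set b0; b1]).
Hypotheses (neq_b01 : b0 != b1) (nb01 : ~~ e b0 b1).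
Hypotheses (alD : al \in D) (al_nb : al \notin [set b0; b1]).
Hypotheses (arD : ar \in D) (ar_nb : ar \notin [set b0; b1]).
Hypotheses (Nal : nbhd_in e D al = [set bl; b0]) (Nar : nbhd_in e D ar = [set br; b1]).
Hypothesis nalr : ~~ e al ar.

Let Nu_sym : nbhd_in e D u = [set b1; b0]. Proof. by rewrite Nu setUC. Qed.
Let Nw_sym : nbhd_in e D w = [set b1; b0]. Proof. by rewrite Nw setUC. Qed.
Let ar_nb_sym : ar \notin [set b1; b0]. Proof. by rewrite setUC. Qed.

Lemma attach_b0_or_b1 : e t b0 || e t b1.
Proof.
have /nbhd_inP[b0D ub0] : b0 \in nbhd_in e D u by rewrite Nu !inE eqxx.
have /nbhd_inP[b1D ub1] : b1 \in nbhd_in e D u by rewrite Nu !inE eqxx orbT.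
have ut : e u t by rewrite e_sym.
have := claw_free_cover ub0 ub1 ut neq_b01 nb01.
by rewrite ![t == _]eq_sym (negbTE (memPn tD _ b0D)) (negbTE (memPn tD _ b1D)) !(e_sym _ t).
Qed.

Lemma attach_both_b1_eq : e t b0 -> e t b1 -> b1 = bl.
Proof.
move=> tb0 tb1.
have [tal _] := attach_nbhd_sub Nu Nw alD al_nb Nal tb0.
have [tar _] := attach_nbhd_sub Nu_sym Nw_sym arD ar_nb_sym Nar tb1.
have nual : ~~ e u al by apply: contra al_nb => ual; rewrite -Nu inE alD ual.
have nuar : ~~ e u ar by apply: contra ar_nb => uar; rewrite -Nu inE arD uar.
have neq_ual : u != al by rewrite eq_sym (memPn uD).
have := claw_free_cover tu tal tar neq_ual nual.
rewrite (negbTE (memPn uD ar arD)) (negbTE nuar) (negbTE nalr) !orbF => /eqP eq_ar.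
have : b1 \in nbhd_in e D al by rewrite -eq_ar Nar !inE eqxx orbT.
by rewrite Nal !inE [b1 == b0]eq_sym (negbTE neq_b01) orbF => /eqP.
Qed.

Lemma nbhd_in_attach :
  [\/ nbhd_in e D t = [set al; b0], nbhd_in e D t = [set bl; al; b0],
      nbhd_in e D t = [set ar; b1] | nbhd_in e D t = [set br; ar; b1]].
Proof.
case tb0: (e t b0).
  have := attach_nbhd_eq Nu Nw alD al_nb Nal tb0 (attach_both_b1_eq tb0).
  by case: (e t bl) => ->; [constructor 2 | constructor 1].
have tb1 : e t b1 by move: attach_b0_or_b1; rewrite tb0.
have ntb0 : e t b0 -> b0 = br by rewrite tb0.
have := attach_nbhd_eq Nu_sym Nw_sym arD ar_nb_sym Nar tb1 ntb0.
by case: (e t br) => ->; [constructor 4 | constructor 3].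
Qed.

End Attachment.
End ClawFree.

Section EvenHole.

Variables (T : finType) (e : rel T) (k : nat) (a b : nat -> T).
Hypothesis e_sym : symmetric e.
Hypothesis k_ge2 : 2 <= k.
Hypothesis a_inj : forall i j, i < k -> j < k -> a i = a j -> i = j.
Hypothesis a_indep : forall i j, i < k -> j < k -> ~~ e (a i) (a j).
Hypothesis a_neq_b : forall i j, i < k -> j < k -> a i != b j.
Hypothesis b_adj_a : forall i j, i < k -> j < k ->
  e (b i) (a j) = (i == j) || (i == (j + 1) %% k).

Let k_gt0 : 0 < k. Proof. exact: ltnW. Qed.

Lemma hole_setP x : reflect (exists2 i, i < k & x = a i \/ x = b i) (x \in hole_set k a b).
Proof.
rewrite inE; apply: (iffP existsP) => [[i /orP[]/eqP->]|[i ik [->|->]]].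
- by exists i => //; left.
- by exists i => //; right.
- by exists (Ordinal ik); rewrite eqxx.
- by exists (Ordinal ik); rewrite eqxx orbT.
Qed.

Lemma mem_punctured_hole_a i : 0 < i -> i < k -> a i \in hole_set k a b :\ a 0.
Proof.
move=> i_gt0 ik; rewrite in_setD1; apply/andP; split.
  by apply: contraTneq i_gt0 => /a_inj-> //; apply: leq_ltn_trans ik.
by apply/hole_setP; exists i => //; left.
Qed.

Lemma a_notin_b01 i : i < k -> a i \notin [set b 0; b 1].
Proof. by move=> ik; rewrite !inE negb_or !a_neq_b. Qed.

Lemma nbhd_punctured_hole_a i : i < k ->
  nbhd_in e (hole_set k a b :\ a 0) (a i) = [set b i; b (i.+1 %% k)].
Proof.
move=> ik; have i1k : i.+1 %% k < k by rewrite ltn_pmod.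
have b_punctured j : j < k -> b j \in hole_set k a b :\ a 0.
  by move=> jk; rewrite in_setD1 eq_sym a_neq_b //; apply/hole_setP; exists j => //; right.
apply/setP => x; rewrite in_set in_setD1 in_set2; apply/idP/idP.
- case/andP=> /andP[_ /hole_setP[j jk [->|->]]]; first by rewrite (negbTE (a_indep _ _)).
  by rewrite e_sym b_adj_a // addn1 => /orP[]/eqP->; rewrite eqxx ?orbT.
- case/orP=> /eqP->; rewrite -in_setD1 b_punctured // e_sym b_adj_a //.
  + by rewrite eqxx.
  + by rewrite addn1 eqxx orbT.
Qed.

Lemma nbhd_punctured_hole_clone x :
  nbhd_in e (hole_set k a b) x = [set b 0; a 0; b 1] ->
  nbhd_in e (hole_set k a b :\ a 0) x = [set b 0; b 1].
Proof.
move=> Nx; rewrite nbhd_in_setD1 Nx; apply/setP => y; rewrite !inE.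
have [->|_] := eqVneq y (a 0); last by rewrite orbF.
by rewrite ![a 0 == _](negbTE (a_neq_b _ _)).
Qed.

End EvenHole.

Theorem lemma3 (T : finType) (e : rel T) (k : nat) (a b : nat -> T) (s t : T) :
  simple_graph e -> claw_free e -> even_hole e k a b ->
  s \notin hole_set k a b ->
  nbhd_in e (hole_set k a b) s = [set b 0; a 0; b 1] ->
  t \notin hole_set k a b -> t != s ->
  e t s (+) e t (a 0) ->
  let u := if e t s then s else a 0 in
  let N := nbhd_in e (s |: hole_set k a b) t in
  [\/ N = [set a (k.-1); b 0; u],
      N = [set b (k.-1); a (k.-1); b 0; u],
      N = [set u; b 1; a 1] |
      N = [set u; b 1; a 1; b (2 %% k)]].
Proof.
move=> [e_sym _] cf [k_ge2 [a_inj [b_inj [a_neq_b [a_indep [b_indep b_adj_a]]]]]].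
move=> sH Ns tH neq_ts t_xor u N.
have k_gt0 : 0 < k by apply: ltnW.
have [km1_gt0 km1_lt] : 0 < k.-1 /\ k.-1 < k by rewrite -ltnS prednK // ltn_predL.
have a0H : a 0 \in hole_set k a b by apply/hole_setP; exists 0 => //; left.
set D := hole_set k a b :\ a 0.
have Na := nbhd_punctured_hole_a e_sym k_ge2 a_indep a_neq_b b_adj_a.
pose w := if e t s then a 0 else s.
have [Nu Nw] : nbhd_in e D u = [set b 0; b 1] /\ nbhd_in e D w = [set b 0; b 1].
  have Ns' := nbhd_punctured_hole_clone k_ge2 a_neq_b Ns.
  by rewrite /u /w; case: ifP => _; rewrite ?Na // modn_small.
have [uD wD] : u \notin D /\ w \notin D.
  by rewrite /u /w /D; case: ifP => _; rewrite !in_setD1 eqxx (negbTE sH) andbF.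
have tD : t \notin D by rewrite in_setD1 (negbTE tH) andbF.
have neq_ta0 : t != a 0 by apply: contraNneq tH => ->.
have [tu ntw neq_tw] : [/\ e t u, ~~ e t w & t != w].
  by rewrite /u /w; move: t_xor; case ts: (e t s) => /= t_a0; split; rewrite ?ts.
have neq_b01 : b 0 != b 1 by apply/eqP => /b_inj-/(_ k_gt0 k_ge2).
have Nal : nbhd_in e D (a k.-1) = [set b k.-1; b 0] by rewrite Na // prednK // modnn.
have Nar : nbhd_in e D (a 1) = [set b (2 %% k); b 1] by rewrite Na // setUC.
have := nbhd_in_attach e_sym cf uD wD tD tu ntw neq_tw Nu Nw neq_b01 (b_indep _ _ k_gt0 k_ge2)
  (mem_punctured_hole_a b k_ge2 a_inj km1_gt0 km1_lt) (a_notin_b01 k_ge2 a_neq_b km1_lt)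
  (mem_punctured_hole_a (i := 1) b k_ge2 a_inj isT k_ge2) (a_notin_b01 k_ge2 a_neq_b k_ge2)
  Nal Nar (a_indep _ _ km1_lt k_ge2).
rewrite /N (nbhd_in_exchange a0H t_xor) -/u -/D.
case=> ->; [constructor 1 | constructor 2 | constructor 3 | constructor 4];
  by apply/eqP; rewrite eqEsubset !subUset !sub1set !inE !eqxx !(orbT, orTb).
Qed.
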